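(* Let $\mathcal{P}$ be a finite collection of parameterizations of vector cycles of length 5 in $\mathbb{Z}^3$. Then there exists some $t \in T$ that is not represented by any parameterization in $\mathcal{P}$.
   Context: $T$ is the set of positive integers $t \equiv 2 \pmod 4$ whose square-free part has at least one odd prime factor $p$ with $p \equiv 2 \pmod 3$. A parameterization of a vector cycle of length 5 in $\mathbb{Z}^3$ is a list of five vectors $w_1, \ldots, w_5$ whose coordinates are integer linear forms $\lambda x + \mu y$ ($\lambda, \mu \in \mathbb{Z}$) in two variables $x, y$, such that $w_1 + \cdots + w_5 = \mathbf{0}$ identically and the squared Euclidean norms $|w_1|^2, \ldots, |w_5|^2$ are all equal to one and the same binary quadratic form $F(x,y) = ax^2 + bxy + cy^2$. Such a parameterization represents a positive integer $t$ if there exist integers $x, y$ with $F(x,y) = t$ (i.e., substituting these $x,y$ yields five vectors of $\mathbb{Z}^3$, each of magnitude $\sqrt{t}$, summing to zero). *)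

From mathcomp Require Import all_boot all_order all_algebra.
Set Implicit Arguments. Unset Strict Implicit. Unset Printing Implicit Defensive.
Import Order.TTheory GRing.Theory Num.Theory.
Local Open Scope ring_scope.

Definition linform := (int * int)%type.
Definition eval_lf (l : linform) (x y : int) : int := l.1 * x + l.2 * y.

(* A list of five vectors of Z^3 whose coordinates are linear forms:
   w i k is the k-th coordinate of w_(i+1). *)
Definition vec5param := 'I_5 -> 'I_3 -> linform.

Definition sqnorm (w : vec5param) (i : 'I_5) (x y : int) : int :=
  \sum_(k < 3) (eval_lf (w i k) x y) ^+ 2.

Definition binqf := (int * int * int)%type.
Definition eval_qf (F : binqf) (x y : int) : int :=
  F.1.1 * x ^+ 2 + F.1.2 * x * y + F.2 * y ^+ 2.

Definition is_cycle5_param (w : vec5param) (F : binqf) : Prop :=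
  (forall (k : 'I_3) (x y : int), \sum_(i < 5) eval_lf (w i k) x y = 0) /\
  (forall (i : 'I_5) (x y : int), sqnorm w i x y = eval_qf F x y).

Definition represents (F : binqf) (t : nat) : Prop :=
  exists x y : int, eval_qf F x y = t%:Z.

Definition sqfree_part (t : nat) : nat :=
  (\prod_(p <- primes t) p ^ (odd (logn p t)))%N.

Definition inT (t : nat) : Prop :=
  ((0 < t) /\ t = 2 %[mod 4] /\
  exists p : nat, [/\ prime p, odd p, p %| sqfree_part t & p = 2 %[mod 3]])%N.

From mathcomp Require Import all_boot all_order all_algebra.
From mathcomp Require Import finfield zify ring.
Set Implicit Arguments. Unset Strict Implicit. Unset Printing Implicit Defensive.
Import Order.TTheory GRing.Theory Num.Theory.
Local Open Scope ring_scope.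

(* Write F = |w_1|^2 as A x^2 + 2 B x y + C y^2; since F is a sum of three
   squares of linear forms, A C - B^2 >= 0 by Cauchy-Schwarz.  Such a form
   has an odd prime q that never divides one of its values exactly once.  If
   A C - B^2 > 0, pick q = 3 mod 4 such that A C - B^2 is a nonzero square
   mod q: as -1 is not a square mod q, F is then anisotropic mod q, so
   q | F(x, y) forces q | x and q | y.  If A C - B^2 = 0, then A F or C F is
   a perfect square and any prime larger than |A| + |C| works.  Finally
   t = 2 * 5 * (the product of these primes) lies in T, and each such q
   divides t exactly once, so no form of the family represents t. *)

Definition qform (R : comPzRingType) (A B C x y : R) : R :=
  A * x ^+ 2 + 2 * B * x * y + C * y ^+ 2.

Lemma mul_coefx2_qform (R : comPzRingType) (A B C x y : R) :
  A * qform A B C x y = (A * x + B * y) ^+ 2 + (A * C - B ^+ 2) * y ^+ 2.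
Proof. by rewrite /qform; ring. Qed.

Lemma mul_coefy2_qform (R : comPzRingType) (A B C x y : R) :
  C * qform A B C x y = (B * x + C * y) ^+ 2 + (A * C - B ^+ 2) * x ^+ 2.
Proof. by rewrite /qform; ring. Qed.

Lemma rmorph_qform (R S : comPzRingType) (f : {rmorphism R -> S}) (A B C x y : R) :
  f (qform A B C x y) = qform (f A) (f B) (f C) (f x) (f y).
Proof. by rewrite /qform !rmorphD !rmorphM rmorph_nat !expr2. Qed.

Section AnisotropicForms.

Variable F : fieldType.
Hypothesis sqr_neqN1 : forall w : F, w ^+ 2 != -1.

Lemma sqr_add_sqr_eq0 (u v : F) : u ^+ 2 + v ^+ 2 = 0 -> u = 0 /\ v = 0.
Proof.
move=> uv0.
have v0 : v = 0.
  apply/eqP; apply: contraTT (sqr_neqN1 (u / v)) => v_neq0; apply/negPn/eqP.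
  have u2 : u ^+ 2 = - v ^+ 2 by apply/eqP; rewrite -addr_eq0 uv0.
  by rewrite expr_div_n u2 mulNr divff // expf_neq0.
by move: uv0; rewrite v0 expr0n addr0 => /eqP; rewrite sqrf_eq0 => /eqP.
Qed.

Lemma qform_eq0 (A B C k x y : F) :
  k != 0 -> A * C - B ^+ 2 = k ^+ 2 -> qform A B C x y = 0 -> x = 0 /\ y = 0.
Proof.
move=> k_neq0 disc Q0.
have mul_eq0 z : k * z = 0 -> z = 0 by move/eqP; rewrite mulf_eq0 (negbTE k_neq0) => /eqP.
have /sqr_add_sqr_eq0[_ /mul_eq0 y0] : (A * x + B * y) ^+ 2 + (k * y) ^+ 2 = 0.
  by rewrite exprMn -disc -mul_coefx2_qform Q0 mulr0.
have /sqr_add_sqr_eq0[_ /mul_eq0 x0] : (B * x + C * y) ^+ 2 + (k * x) ^+ 2 = 0.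
  by rewrite exprMn -disc -mul_coefy2_qform Q0 mulr0.
by split.
Qed.

End AnisotropicForms.

Lemma Fp_sqr_neqN1 (q : nat) :
  prime q -> (q %% 4 = 3)%N -> forall w : 'F_q, w ^+ 2 != -1.
Proof.
move=> q_pr q_mod4 w; apply/eqP => w2.
have q_char := pchar_Fp q_pr.
(* Fermat: w = w ^+ q = (w ^+ 2) ^+ (2 r + 1) * w = - w, where q = 4 r + 3. *)
have w_opp : w = - w.
  have q_eq : q = (2 * (2 * (q %/ 4) + 1) + 1)%N.
    by rewrite {1}(divn_eq q 4) q_mod4; lia.
  have wq : w ^+ q = w by rewrite -[in X in w ^+ X](card_Fp q_pr) expf_card.
  have : w ^+ (2 * (2 * (q %/ 4) + 1) + 1)%N = - w.
    by rewrite exprD exprM w2 expr1 -signr_odd oddD oddM /= mulN1r.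
  by rewrite -q_eq wq.
have two_neq0 : (2%:R : 'F_q) != 0.
  by rewrite -(dvdn_pcharf q_char); apply/negP => /(dvdn_leq (isT : (0 < 2)%N)); lia.
have /eqP : 2%:R * w = 0 by rewrite mulr_natl mulr2n {1}w_opp addNr.
rewrite mulf_eq0 (negbTE two_neq0) => /eqP w0.
by move: w2; rewrite w0 expr0n /= => /eqP; rewrite eq_sym oppr_eq0 oner_eq0.
Qed.

Lemma prime_mod4_3_dvd (m : nat) :
  (m %% 4 = 3)%N -> exists q, [/\ prime q, q %% 4 = 3 & q %| m]%N.
Proof.
elim/ltn_ind: m => m IHm m_mod4.
have m_gt1 : (1 < m)%N by lia.
have p_pr := pdiv_prime m_gt1; have p_dvd := pdiv_dvd m.
have p_odd : odd (pdiv m).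
  have [p2|//] := even_prime p_pr.
  by move: p_dvd; rewrite p2 /dvdn => /eqP; lia.
have [p_mod4|p_mod4] : (pdiv m %% 4 = 1 \/ pdiv m %% 4 = 3)%N.
  have : (pdiv m %% 4 %% 2 = 1)%N by rewrite modn_dvdm // modn2 p_odd.
  lia.
- have m_eq := divnK p_dvd.
  have [||q [q_pr q_mod4 q_dvd]] := IHm (m %/ pdiv m)%N.
    - by rewrite ltn_Pdiv ?prime_gt1 // ltnW.
    - by rewrite -[RHS]m_mod4 -[in RHS]m_eq -modnMmr p_mod4 muln1.
  by exists q; split => //; exact: dvdn_trans q_dvd (dvdn_div p_dvd).
- by exists (pdiv m).
Qed.

Lemma sqr_mod_prime_of_gap (d k m : nat) :
  coprime k d -> (m %% 4 = 3)%N -> (d + m = k ^ 2 \/ k ^ 2 + m = d)%N ->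
  exists q, [/\ prime q, q %% 4 = 3, ~~ (q %| k) & k ^ 2 = d %[mod q]]%N.
Proof.
move=> kd_coprime m_mod4 gap.
have [q [q_pr q_mod4 /dvdnP[r m_eq]]] := prime_mod4_3_dvd m_mod4.
exists q; split => //.
- apply/negP => q_dvd_k.
  have q_dvd_d : (q %| d)%N.
    have q_dvd_k2 : (q %| k ^ 2)%N by rewrite dvdn_exp.
    have q_dvd_m : (q %| m)%N by rewrite m_eq dvdn_mull.
    case: gap => gap_eq; last by rewrite -gap_eq dvdn_add.
    by move: q_dvd_k2; rewrite -gap_eq dvdn_addl.
  by move: (coprime_dvdl q_dvd_k kd_coprime); rewrite prime_coprime // q_dvd_d.
- by case: gap => <-; rewrite m_eq ?[(d + _)%N]addnC ?[(_ + r * q)%N]addnC modnMDl.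
Qed.

Lemma sqr_mod_prime_mod4_3 (d : nat) :
  (0 < d)%N -> exists q k, [/\ prime q, q %% 4 = 3, ~~ (q %| k) & k ^ 2 = d %[mod q]]%N.
Proof.
move=> d_gt0.
(* 3 is neither k ^ 2 + m nor k ^ 2 - m with m = 3 mod 4 and k coprime to 3. *)
have [->|d_neq3] := eqVneq d 3%N; first by exists 11%N, 5%N.
suff [k [m [kd_coprime m_mod4 gap]]] : exists k m,
    [/\ coprime k d, m %% 4 = 3 & d + m = k ^ 2 \/ k ^ 2 + m = d]%N.
  by have [q ?] := sqr_mod_prime_of_gap kd_coprime m_mod4 gap; exists q, k.
have [d_mod4|[d_mod4|[d_mod4|d_mod4]]] :
  (d %% 4 = 0 \/ d %% 4 = 1 \/ d %% 4 = 2 \/ d %% 4 = 3)%N by lia.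
- by exists 1%N, d.-1; rewrite coprime1n; split => //; lia.
- by exists d.+1, (d ^ 2 + d + 1)%N; rewrite coprimeSn; split => //; nia.
- by exists d.+1, (d ^ 2 + d + 1)%N; rewrite coprimeSn; split => //; nia.
- by exists 2%N, (d - 4)%N; rewrite coprime2n; split; lia.
Qed.

Definition no_simple_factor (q : nat) (f : int -> int -> int) : Prop :=
  forall x y, (q %| `|f x y|)%N -> (q ^ 2 %| `|f x y|)%N.

Lemma sqr_dvd_of_mul_eq_sqr (q c n z : nat) :
  prime q -> ~~ (q %| c)%N -> (c * n = z ^ 2)%N -> (q %| n)%N -> (q ^ 2 %| n)%N.
Proof.
move=> q_pr q_ndvd_c cn_eq q_dvd_n.
have q_dvd_z : (q %| z)%N.
  by have := Euclid_dvdX z 2 q_pr; rewrite andbT -cn_eq dvdn_mull // => <-.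
have q2c_coprime : coprime (q ^ 2) c by rewrite coprimeXl // prime_coprime.
by rewrite -(Gauss_dvdr _ q2c_coprime) cn_eq dvdn_exp2r.
Qed.

Lemma qform_no_simple_factor_degenerate (A B C : int) :
  A * C = B ^+ 2 -> exists q, [/\ prime q, odd q & no_simple_factor q (qform A B C)].
Proof.
move=> disc0.
have [q q_gt q_pr] := prime_above (`|A| + `|C| + 2)%N.
exists q; split => //; first by have [q2|//] := even_prime q_pr; move: q_gt; rewrite q2; lia.
move=> x y.
have via_sqr (c z : int) : c != 0 -> (`|c| <= `|A| + `|C|)%N ->
    c * qform A B C x y = z ^+ 2 ->
    (q %| `|qform A B C x y|)%N -> (q ^ 2 %| `|qform A B C x y|)%N.
  move=> c_neq0 c_le cQ_eq; apply: (sqr_dvd_of_mul_eq_sqr (c := `|c|) (z := `|z|)) => //.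
  - by rewrite gtnNdvd ?absz_gt0 //; lia.
  - by rewrite -abszM cQ_eq abszX.
have [A0|A_neq0] := eqVneq A 0; last first.
  apply: (via_sqr A (A * x + B * y)) => //; first by lia.
  by rewrite mul_coefx2_qform disc0 subrr mul0r addr0.
have [C0|C_neq0] := eqVneq C 0; last first.
  apply: (via_sqr C (B * x + C * y)) => //; first by lia.
  by rewrite mul_coefy2_qform disc0 subrr mul0r addr0.
have B0 : B = 0 by apply/eqP; rewrite -sqrf_eq0 -disc0 A0 mul0r.
by rewrite /qform A0 B0 C0 !(mul0r, mulr0, add0r) dvdn0.
Qed.

Lemma qform_no_simple_factor_pos (A B C : int) :
  0 < A * C - B ^+ 2 -> exists q, [/\ prime q, odd q & no_simple_factor q (qform A B C)].
Proof.
move=> disc_gt0.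
have /sqr_mod_prime_mod4_3[q [k [q_pr q_mod4 q_ndvd_k k2_mod]]] :
  (0 < `|(A * C - B ^+ 2)%R|)%N by rewrite absz_gt0 gt_eqF.
exists q; split => //; first by lia.
move=> x y q_dvd_Q.
have q_char := pchar_Fp q_pr.
have [x0 y0] : (x%:~R : 'F_q) = 0 /\ (y%:~R : 'F_q) = 0.
  apply: (qform_eq0 (Fp_sqr_neqN1 q_pr q_mod4)
    (A := A%:~R) (B := B%:~R) (C := C%:~R) (k := k%:R)).
  - by rewrite -(dvdn_pcharf q_char).
  - transitivity ((A * C - B ^+ 2)%:~R : 'F_q); first by rewrite rmorphB rmorphM rmorphXn.
    rewrite -(gtz0_abs disc_gt0).
    by rewrite -natrX -[RHS](Fp_nat_mod q_pr) k2_mod Fp_nat_mod.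
  - by rewrite -rmorph_qform; apply/eqP; rewrite -(dvdz_pcharf q_char).
have [x1 ->] : exists x1, x = x1 * q%:Z by apply/dvdzP; rewrite (dvdz_pcharf q_char) x0.
have [y1 ->] : exists y1, y = y1 * q%:Z by apply/dvdzP; rewrite (dvdz_pcharf q_char) y0.
change ((q ^ 2)%N%:Z %| qform A B C (x1 * q) (y1 * q))%Z.
by apply/dvdzP; exists (qform A B C x1 y1); rewrite /qform -mulnn PoszM; ring.
Qed.

Lemma qform_no_simple_factor (A B C : int) :
  B ^+ 2 <= A * C -> exists q, [/\ prime q, odd q & no_simple_factor q (qform A B C)].
Proof.
rewrite -subr_ge0 le_eqVlt => /orP[/eqP disc0 | /qform_no_simple_factor_pos //].
by apply: qform_no_simple_factor_degenerate; apply/eqP; rewrite -subr_eq0 disc0.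
Qed.

Lemma sum_sqr_linear (R : comPzRingType) (I : finType) (a b : I -> R) (x y : R) :
  \sum_i (a i * x + b i * y) ^+ 2 =
  qform (\sum_i a i ^+ 2) (\sum_i a i * b i) (\sum_i b i ^+ 2) x y.
Proof.
rewrite /qform mulr_sumr !mulr_suml -!big_split /=.
by apply: eq_bigr => i _; ring.
Qed.

Lemma sum_cauchy_schwarz (R : realDomainType) (I : finType) (a b : I -> R) :
  (\sum_i a i * b i) ^+ 2 <= (\sum_i a i ^+ 2) * (\sum_i b i ^+ 2).
Proof.
set A := \sum_i a i ^+ 2; set B := \sum_i a i * b i; set C := \sum_i b i ^+ 2.
have qform_ge0 x y : 0 <= qform A B C x y.
  by rewrite -sum_sqr_linear sumr_ge0 // => i _; exact: sqr_ge0.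
have : 0 <= A by rewrite sumr_ge0 // => i _; exact: sqr_ge0.
rewrite le_eqVlt => /orP[/eqP A0 | A_gt0].
  have a0 i : a i = 0.
    apply/eqP; rewrite -sqrf_eq0; apply/eqP.
    exact: (psumr_eq0P (fun j _ => sqr_ge0 (a j)) (esym A0)).
  by rewrite /B big1 => [|i _]; rewrite ?a0 ?mul0r // -A0 expr0n mul0r.
have := qform_ge0 B (- A).
have -> : qform A B C B (- A) = A * (A * C - B ^+ 2) by rewrite /qform; ring.
by rewrite pmulr_rge0 // subr_ge0.
Qed.

Lemma sqnorm_no_simple_factor (w : vec5param) (i : 'I_5) :
  exists q, [/\ prime q, odd q & no_simple_factor q (sqnorm w i)].
Proof.
have [q [q_pr q_odd q_nsf]] :=
  qform_no_simple_factor (sum_cauchy_schwarz (fun k => (w i k).1) (fun k => (w i k).2)).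
by exists q; split => // x y; rewrite /sqnorm /eval_lf sum_sqr_linear; exact: q_nsf.
Qed.

Lemma no_simple_factor_neq (q : nat) (f : int -> int -> int) (t : nat) :
  prime q -> no_simple_factor q f -> logn q t = 1%N -> forall x y, f x y <> t%:Z.
Proof.
move=> q_pr f_nsf logn_t x y f_eq.
have t_gt0 : (0 < t)%N by case: t logn_t {f_eq} => [|//]; rewrite logn0.
have q_dvd_t : (q %| t)%N by have := pfactor_dvdnn q t; rewrite logn_t expn1.
by have := f_nsf x y; rewrite f_eq /= (pfactor_dvdn 2 q_pr t_gt0) logn_t => /(_ q_dvd_t).
Qed.

Lemma logn_prod_primes (q : nat) (s : seq nat) :
  all prime s -> logn q (\prod_(p <- s) p) = count_mem q s.
Proof.
elim: s => [|p s IHs] /=; first by rewrite big_nil logn1.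
move=> /andP[p_pr s_pr].
have prod_gt0 : (0 < \prod_(p <- s) p)%N.
  by rewrite big_seq prodn_cond_gt0 // => r /(allP s_pr)/prime_gt0.
by rewrite big_cons (lognM _ (prime_gt0 p_pr) prod_gt0) logn_prime // IHs // eq_sym.
Qed.

Lemma dvdn_sqfree_part (p t : nat) : odd (logn p t) -> (p %| sqfree_part t)%N.
Proof.
move=> logn_odd.
have p_in : p \in primes t by rewrite -logn_gt0; case: (logn p t) logn_odd.
by rewrite /sqfree_part (big_rem _ p_in) /= logn_odd expn1 dvdn_mulr.
Qed.

Lemma exists_inT_logn1 (s : seq nat) :
  all (fun p => prime p && odd p) s ->
  exists t, inT t /\ forall q, q \in s -> logn q t = 1%N.
Proof.
move=> s_odd_pr.
set r := undup (5 :: s).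
have r_odd_pr p : p \in r -> prime p && odd p.
  by rewrite mem_undup inE => /orP[/eqP -> // | /(allP s_odd_pr)].
have m_odd : odd (\prod_(p <- r) p).
  rewrite big_seq; apply: (big_ind odd) => // [m n m_odd n_odd | p /r_odd_pr/andP[]//].
  by rewrite oddM m_odd.
have m_gt0 := odd_gt0 m_odd.
have logn_t q : q \in 5 :: s -> logn q (2 * \prod_(p <- r) p) = 1%N.
  rewrite -(mem_undup (5 :: s)) => q_r; have /andP[q_pr q_odd] := r_odd_pr q q_r.
  rewrite lognM // logn_prime // logn_prod_primes; last by apply/allP => p /r_odd_pr/andP[].
  by rewrite count_uniq_mem ?undup_uniq // q_r; case: eqP q_odd => // ->.
exists (2 * \prod_(p <- r) p)%N; split; last first.
  by move=> q q_s; apply: logn_t; rewrite inE q_s orbT.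
split; first by rewrite muln_gt0.
split; first by apply/eqP; lia.
by exists 5%N; split => //; apply: dvdn_sqfree_part; rewrite logn_t ?mem_head.
Qed.

Lemma fin_exists_seq (I : finType) (T : eqType) (P : pred T) (R : I -> T -> Prop) :
  (forall i, exists2 x, P x & R i x) ->
  exists s : seq T, all P s /\ forall i, exists2 x, x \in s & R i x.
Proof.
move=> hR.
suff [s [s_P s_cover]] : exists s : seq T, all P s /\
    forall i, i \in enum I -> exists2 x, x \in s & R i x.
  by exists s; split => // i; apply: s_cover; rewrite mem_enum.
elim: (enum I) => [|i e [s [s_P s_cover]]]; first by exists [::].
have [x Px Rx] := hR i.
exists (x :: s); split; first by rewrite /= Px.
move=> j; rewrite inE => /orP[/eqP -> | j_e]; first by exists x; rewrite ?mem_head.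
by have [y y_s Ry] := s_cover j j_e; exists y; rewrite // inE y_s orbT.
Qed.

Theorem theorem8 (n : nat) (P : 'I_n -> vec5param * binqf) :
  (forall j : 'I_n, is_cycle5_param (P j).1 (P j).2) ->
  exists t : nat, inT t /\ forall j : 'I_n, ~ represents (P j).2 t.
Proof.
move=> P_cycle.
have [s [s_odd_pr s_cover]] : exists s : seq nat, all (fun p => prime p && odd p) s /\
    forall j, exists2 q, q \in s & no_simple_factor q (eval_qf (P j).2).
  apply: fin_exists_seq => j.
  have [q [q_pr q_odd q_nsf]] := sqnorm_no_simple_factor (P j).1 ord0.
  by exists q; [rewrite q_pr | move=> x y; rewrite -((P_cycle j).2 ord0); exact: q_nsf].
have [t [t_T t_logn]] := exists_inT_logn1 s_odd_pr.
exists t; split => // j [x [y F_eq]].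
have [q q_s q_nsf] := s_cover j.
have /andP[q_pr _] := allP s_odd_pr q q_s.
exact: no_simple_factor_neq q_pr q_nsf (t_logn q q_s) x y F_eq.
Qed.
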